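(* Let $p,p'\ge1$ with $|p-p'|=1$, $p_{\min}=\min\{p,p'\}$, and let $S=\alpha_{(p,p')}(S')$ where $S'$ is a Sturmian word (so $a^{p_{\min}}b$ is the short block of $S$). If $X$ is a palindrome that is maximal in $S$ and $|X|_b>0$, then $X=Uba^{p_{\min}}=a^{p_{\min}}bV$ for some words $U,V$.
   Context: $\alpha_{(p,p')}$ is the morphism $a\mapsto a^pb$, $b\mapsto a^{p'}b$. A Sturmian word is a right-infinite aperiodic word over $\{a,b\}$ with exactly $n+1$ factors of each length $n$. $|X|_b$ is the number of occurrences of $b$ in $X$. A palindrome $X$ is maximal in $S$ if $lXl'$ is a factor of $S$ for some letters $l\neq l'$. *)

From HB Require Import structures.
From mathcomp Require Import all_boot.
Set Implicit Arguments. Unset Strict Implicit. Unset Printing Implicit Defensive.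

Inductive letter := la | lb.

Definition letter_eqb (x y : letter) : bool :=
  match x, y with la, la | lb, lb => true | _, _ => false end.
Lemma letter_eqP : Equality.axiom letter_eqb.
Proof. by case; case; constructor. Qed.
HB.instance Definition _ := hasDecEq.Build letter letter_eqP.

Definition word := seq letter.
Definition infword := nat -> letter.

Definition subword (w : infword) (i n : nat) : word :=
  [seq w (i + k) | k <- iota 0 n].

Definition factor (u : word) (w : infword) : Prop :=
  exists i, u = subword w i (size u).

Definition aperiodic (w : infword) : Prop :=
  ~ (exists per N, 0 < per /\ forall i, N <= i -> w (i + per) = w i).

Definition complexity_n_plus_1 (w : infword) : Prop :=
  forall n, exists s : seq word,
    [/\ uniq s, size s = n.+1 &
        forall u, size u = n -> (factor u w <-> u \in s)].

Definition sturmian (w : infword) : Prop :=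
  aperiodic w /\ complexity_n_plus_1 w.

Definition alpha (p p' : nat) (l : letter) : word :=
  match l with
  | la => rcons (nseq p la) lb
  | lb => rcons (nseq p' la) lb
  end.

(* S = f(S') for a morphism f (with nonempty images) applied letterwise to the
   infinite word S': every image of a prefix of S' is a prefix of S. *)
Definition morph_image (f : letter -> word) (S' S : infword) : Prop :=
  forall n, let u := flatten [seq f (S' k) | k <- iota 0 n] in
            subword S 0 (size u) = u.

Definition palindrome (X : word) : Prop := rev X = X.

Definition count_b (X : word) : nat := count (pred1 lb) X.

Definition maximal_pal_in (X : word) (S : infword) : Prop :=
  palindrome X /\ exists l l' : letter, l != l' /\ factor (l :: rcons X l') S.

(* S is a concatenation of blocks a^c b with c in {m, m+1}, m = min p p'.
   Hence no factor of S contains a^(m+2), and between two consecutive b's of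
   S there are at least m a's; both properties are invariant under reversal.
   Let lXl' be a factor with l <> l', X a palindrome, and k the number of a's
   before the first b of X, so that X also ends with b a^k.  Up to reversal
   l = a and l' = b; then a a^k is a factor, so k <= m, and b a^k b is a
   factor, so k >= m. *)
From mathcomp Require Import all_boot.
From mathcomp Require Import zify.

Set Implicit Arguments.
Unset Strict Implicit.
Unset Printing Implicit Defensive.

Lemma nth_subword (S : infword) i n j :
  j < n -> nth la (subword S i n) j = S (i + j).
Proof.
by move=> hj; rewrite /subword (nth_map 0) ?size_iota // nth_iota.
Qed.

Lemma subwordD (S : infword) i n1 n2 :
  subword S i (n1 + n2) = subword S i n1 ++ subword S (i + n1) n2.
Proof.
rewrite /subword iotaD map_cat add0n; congr (_ ++ _).
rewrite -[in iota n1 n2](addn0 n1) iotaDl -map_comp.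
by apply: eq_map => k /=; rewrite addnA.
Qed.

Lemma factor_infix (S : infword) (u w : word) :
  factor w S -> infix u w -> factor u S.
Proof.
move=> [i hw] /infixP [s [s' def_w]].
exists (i + size s); move: hw; rewrite def_w !size_cat !subwordD.
move/eqP; rewrite !eqseq_cat ?size_map ?size_iota //.
by case/and3P => _ /eqP.
Qed.

Definition a_runs_le n (w : word) := forall j, infix (nseq j la) w -> j <= n.
Definition b_gaps_ge n (w : word) :=
  forall j, infix (lb :: rcons (nseq j la) lb) w -> n <= j.

Lemma a_runs_le_rev n w : a_runs_le n w -> a_runs_le n (rev w).
Proof. by move=> hw j; rewrite -infix_revLR rev_nseq; apply: hw. Qed.

Lemma b_gaps_ge_rev n w : b_gaps_ge n w -> b_gaps_ge n (rev w).
Proof.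
by move=> hw j; rewrite -infix_revLR rev_cons rev_rcons rev_nseq; apply: hw.
Qed.

Lemma split_first_b (X : word) :
  lb \in X -> X = nseq (index lb X) la ++ lb :: drop (index lb X).+1 X.
Proof.
elim: X => //= -[] X IH; rewrite inE /= => hX; last by rewrite drop0.
by rewrite {1}(IH hX).
Qed.

Lemma maximal_pal_index_b m (l l' : letter) (X : word) :
  l != l' -> palindrome X -> lb \in X ->
  a_runs_le m.+1 (l :: rcons X l') -> b_gaps_ge m (l :: rcons X l') ->
  index lb X = m.
Proof.
wlog -> : l l' / l = la.
  move=> gen; case: l => hl hX hb; first exact: gen.
  have -> : lb :: rcons X l' = rev (l' :: rcons X lb).
    by rewrite rev_cons rev_rcons (hX : rev X = X).
  move=> /a_runs_le_rev + /b_gaps_ge_rev; rewrite !revK.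
  by case: l' hl => // _; apply: gen.
case: l' => // _ hX /split_first_b def_X hruns hgaps.
set k := index lb X in def_X *; set V := drop k.+1 X in def_X.
apply/eqP; rewrite eqn_leq; apply/andP; split.
  rewrite -ltnS; apply: hruns.
  by rewrite def_X rcons_cat -cat_cons prefix_infix.
apply: hgaps; rewrite -hX def_X rev_cat rev_cons rev_nseq cat_rcons.
by rewrite rcons_cat -cat_cons suffix_infix.
Qed.

Section AlphaImage.

Variables (p p' : nat) (S' S : infword).
Hypothesis S_image : morph_image (alpha p p') S' S.

Definition block_len n := if S' n is la then p else p'.

Lemma alpha_block n : alpha p p' (S' n) = rcons (nseq (block_len n) la) lb.
Proof. by rewrite /block_len; case: (S' n). Qed.

Definition image_prefix n := flatten [seq alpha p p' (S' k) | k <- iota 0 n].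

Lemma image_prefixS n :
  image_prefix n.+1 = image_prefix n ++ rcons (nseq (block_len n) la) lb.
Proof.
by rewrite /image_prefix -addn1 iotaD map_cat flatten_cat /= cats0 alpha_block.
Qed.

Lemma size_image_prefixS n :
  size (image_prefix n.+1) = size (image_prefix n) + (block_len n).+1.
Proof. by rewrite image_prefixS size_cat size_rcons size_nseq. Qed.

Lemma S_block n o : o <= block_len n ->
  S (size (image_prefix n) + o) = if o == block_len n then lb else la.
Proof.
move=> ho; have hs : size (image_prefix n) + o < size (image_prefix n.+1).
  by rewrite size_image_prefixS ltn_add2l.
rewrite -[size _ + o]add0n -(nth_subword _ _ hs) S_image -/(image_prefix _).
rewrite image_prefixS.
rewrite nth_cat ltnNge leq_addr addKn nth_rcons size_nseq nth_nseq.
by case: ltngtP ho.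
Qed.

Lemma exists_block j :
  exists n, size (image_prefix n) <= j < size (image_prefix n.+1).
Proof.
elim: j => [|j [n /andP [lo hi]]].
  by exists 0; rewrite size_image_prefixS.
have [hi'|lo'] := ltnP j.+1 (size (image_prefix n.+1)).
  by exists n; rewrite hi' andbT ltnW.
by exists n.+1; rewrite lo' size_image_prefixS /=; lia.
Qed.

Variable m : nat.
Hypothesis block_len_bounds : forall n, m <= block_len n <= m.+1.

Lemma exists_b_ahead j : exists2 t, t <= m.+1 & S (j + t) = lb.
Proof.
have [n /andP [lo]] := exists_block j; rewrite size_image_prefixS => hi.
exists (size (image_prefix n) + block_len n - j).
  by have := block_len_bounds n; lia.
by rewrite subnKC ?S_block ?eqxx //; lia.
Qed.

Lemma S_b_block_end j : S j = lb -> exists n, j.+1 = size (image_prefix n.+1).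
Proof.
have [n /andP [lo]] := exists_block j; rewrite size_image_prefixS => hi hb.
exists n; rewrite size_image_prefixS; apply/eqP; rewrite eqn_leq hi /=.
have ho : j - size (image_prefix n) <= block_len n by lia.
move: hb; rewrite -(subnKC lo) S_block //.
by case: eqP => // /eqP; rewrite subnKC // -subn_eq0; lia.
Qed.

Lemma a_after_b j t : S j = lb -> 0 < t <= m -> S (j + t) = la.
Proof.
move=> /S_b_block_end [n hj] ht; have := block_len_bounds n.+1 => hc.
rewrite (_ : j + t = size (image_prefix n.+1) + t.-1); last by lia.
by rewrite S_block; [case: eqP => //; lia | lia].
Qed.

Lemma nth_factor (u : word) i k :
  u = subword S i (size u) -> k < size u -> nth la u k = S (i + k).
Proof. by move=> hu hk; rewrite {1}hu nth_subword. Qed.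

Lemma factor_a_runs_le w : factor w S -> a_runs_le m.+1 w.
Proof.
move=> hw j /(factor_infix hw) [i hu]; rewrite leqNgt; apply/negP => hj.
have [t ht htb] := exists_b_ahead i.
have htj : t < size (nseq j la) by rewrite size_nseq; lia.
by have := nth_factor hu htj; rewrite nth_nseq htb; case: ifP.
Qed.

Lemma factor_b_gaps_ge w : factor w S -> b_gaps_ge m w.
Proof.
move=> hw j /(factor_infix hw) [i hu]; rewrite leqNgt; apply/negP => hj.
have hsize : size (lb :: rcons (nseq j la) lb) = j.+2.
  by rewrite /= size_rcons size_nseq.
have hbi : S i = lb by rewrite -[i]addn0 -(nth_factor hu) ?hsize.
have hlast : j.+1 < size (lb :: rcons (nseq j la) lb) by rewrite hsize.
have := nth_factor hu hlast; rewrite /= nth_rcons size_nseq ltnn eqxx.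
by rewrite a_after_b //; lia.
Qed.

End AlphaImage.

Theorem mainTheorem6 (p p' : nat) (S' S : infword) (X : word) :
  1 <= p -> 1 <= p' -> (p == p'.+1) || (p' == p.+1) ->
  sturmian S' -> morph_image (alpha p p') S' S ->
  maximal_pal_in X S -> 0 < count_b X ->
  exists U V : word,
    X = U ++ lb :: nseq (minn p p') la /\ X = nseq (minn p p') la ++ lb :: V.
Proof.
move=> _ _ hpp _ S_image [hX [l [l' [hll hW]]]] hcount.
have bounds n : minn p p' <= block_len p p' S' n <= (minn p p').+1.
  by rewrite /block_len; case: (S' n); case/orP: hpp => /eqP ->; lia.
have hb : lb \in X by rewrite -has_pred1 has_count.
have hk : index lb X = minn p p'.
  apply: (maximal_pal_index_b hll hX hb).
    exact: (factor_a_runs_le S_image bounds hW).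
  exact: (factor_b_gaps_ge S_image bounds hW).
have def_X := split_first_b hb; rewrite hk in def_X.
exists (rev (drop (minn p p').+1 X)), (drop (minn p p').+1 X); split => //.
by rewrite -[LHS]hX {1}def_X rev_cat rev_cons rev_nseq cat_rcons.
Qed.
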